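(* Let $F$ be a collection of objects in $\mathbb{R}^d$ with density $\rho$, and let $F'$ be a $t$-shallow minor of $F$. Then $F'$ has density at most $t^{O(d)}\rho$.
   Context: A set of objects $F$ in $\mathbb{R}^d$ (not necessarily convex or connected) has density $\rho$ if any object $o$ (not necessarily in $F$) intersects at most $\rho$ objects of $F$ with diameter at least the diameter of $o$. A set $F'$ is a minor of $F$ if it can be obtained from $F$ by deleting objects and replacing pairs of intersecting objects $f,g$ by their union $f\cup g$; each object $g\in F'$ then corresponds to a cluster $\mathrm{cl}(g)\subseteq F$ with $\bigcup_{h\in\mathrm{cl}(g)}h=g$ (clusters being disjoint). $F'$ is a $t$-shallow minor of $F$ if it is a minor and the intersection graph of each cluster is $t$-shallow, i.e., has a vertex joined to all others by paths of at most $t$ edges. The intersection graph of a set of objects has the objects as vertices, with an edge between two objects if they intersect. *)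

From HB Require Import structures.
From mathcomp Require Import all_boot all_order all_algebra.
From mathcomp Require Import boolp classical_sets reals constructive_ereal ereal.
Set Implicit Arguments. Unset Strict Implicit. Unset Printing Implicit Defensive.
Import Order.TTheory GRing.Theory Num.Theory.
Local Open Scope classical_set_scope.
Local Open Scope ring_scope.

Section Objects.
Variables (R : realType) (d : nat).

Definition point := 'rV[R]_d.
Definition object := set point.

Definition edist (x y : point) : R :=
  Num.sqrt (\sum_(i < d) (x ord0 i - y ord0 i) ^+ 2).

(* diameter, in the extended reals (-oo for the empty set, +oo if unbounded) *)
Definition diam (o : object) : \bar R :=
  ereal_sup [set r | exists x y, o x /\ o y /\ r = ((edist x y)%:E)].

Definition intersects (f g : object) : Prop := exists x, f x /\ g x.

Definition has_density (F : seq object) (rho : R) : Prop :=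
  forall (o : object) (S : seq 'I_(size F)), uniq S ->
    (forall i, i \in S ->
       intersects o (nth set0 F i) /\ (diam o <= diam (nth set0 F i))%E) ->
    (size S)%:R <= rho.

(* clusters are lists of indices into F; the object of a cluster is the union *)
Definition cl_union (F : seq object) (c : seq nat) : object :=
  [set x | exists i, i \in c /\ nth set0 F i x].

Definition del_at (C : seq (seq nat)) (k : nat) : seq (seq nat) :=
  [seq nth [::] C j | j <- iota 0 (size C) & j != k].

Definition merge_at (C : seq (seq nat)) (k l : nat) : seq (seq nat) :=
  [seq nth [::] C j | j <- iota 0 (size C) & (j != k) && (j != l)]
    ++ [:: nth [::] C k ++ nth [::] C l].

(* minor_clusters F C : the list of clusters C is reachable from the
   singleton clusters of F by deleting objects and replacing pairs of
   intersecting objects by their union *)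
Inductive minor_clusters (F : seq object) : seq (seq nat) -> Prop :=
| minor_init : minor_clusters F [seq [:: i] | i <- iota 0 (size F)]
| minor_del C k : minor_clusters F C -> (k < size C)%N ->
    minor_clusters F (del_at C k)
| minor_merge C k l : minor_clusters F C -> (k < size C)%N -> (l < size C)%N ->
    (k != l)%N -> intersects (cl_union F (nth [::] C k)) (cl_union F (nth [::] C l)) ->
    minor_clusters F (merge_at C k l).

Definition minor_of (F : seq object) (C : seq (seq nat)) : seq object :=
  map (cl_union F) C.

(* the intersection graph of the cluster c (vertices: the objects F_i, i in c)
   is t-shallow: some vertex u is joined to every vertex v by a path of at
   most t edges *)
Definition shallow_cluster (F : seq object) (t : nat) (c : seq nat) : Prop :=
  exists2 u, u \in c & forall v, v \in c ->
    exists p : seq nat, [/\ (size p <= t)%N, last u p = v &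
      forall j, (j < size p)%N ->
        nth 0 p j \in c /\
        intersects (nth set0 F (nth 0 (u :: p) j)) (nth set0 F (nth 0 p j))].

Definition is_shallow_minor (F : seq object) (t : nat) (C : seq (seq nat)) : Prop :=
  minor_clusters F C /\ forall c, c \in C -> shallow_cluster F t c.

End Objects.

From Pilot Require Import Defs.
From HB Require Import structures.
From mathcomp Require Import all_boot all_order all_algebra.
From mathcomp Require Import boolp classical_sets reals constructive_ereal ereal.
From mathcomp Require Import ring lra zify.
Set Implicit Arguments. Unset Strict Implicit. Unset Printing Implicit Defensive.
Import Order.TTheory GRing.Theory Num.Theory.
Local Open Scope ring_scope.

(* Let o meet m objects of F', each of diameter at least D = diam o.
   Clusters of a minor are disjoint, so picking one member of F in each
   cluster gives m distinct objects of F.  If D <= 0, the members containing a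
   point of o witness m <= rho; if D = +oo, some member of each cluster has
   infinite diameter and meets the whole space.  If 0 < D < +oo, a t-shallow
   cluster is spanned by walks of at most 2t intersecting members, so if all
   its members had diameter below D/(2t+2) it would have diameter below D.
   Walking from the point where the cluster meets o thus reaches a member of
   diameter at least D/(2t+2) within distance 2D of a fixed point of o.  A
   weighted count of lattice points shows that the ball of radius 2D meets at
   most (64(t+1))^d grid cells of diameter D/(2t+2), and by density each cell
   meets at most rho of these members. *)

Lemma leq_self_sqr n : (n <= n ^ 2)%N.
Proof. by case: n => // n; rewrite expnS expn1 leq_pmulr. Qed.

Lemma count_predI_predC (T : Type) (a q : pred T) (s : seq T) :
  (count (predI a q) s + count (predI a (predC q)) s = count a s)%N.
Proof.
by elim: s => //= x s <-; case: (a x); case: (q x); rewrite /= ?addnS.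
Qed.

Lemma count_nth_iota (T : Type) (x0 : T) (p : pred T) (s : seq T) :
  count p s = count (p \o nth x0 s) (iota 0 (size s)).
Proof. by rewrite -{1}(mkseq_nth x0 s) count_map. Qed.

Lemma sum_count_mem_undup (T : eqType) (s : seq T) :
  (\sum_(x <- undup s) count_mem x s)%N = size s.
Proof.
rewrite -(perm_size (perm_count_undup s)) size_flatten /shape -map_comp sumnE.
by rewrite big_map; apply: eq_bigr => x _; rewrite /= size_nseq.
Qed.

Lemma lagrange_identity (R : comPzRingType) (n : nat) (a b : 'I_n -> R) :
  \sum_i \sum_j (a i * b j - a j * b i) ^+ 2 =
  2 * ((\sum_i a i ^+ 2) * (\sum_i b i ^+ 2) - (\sum_i a i * b i) ^+ 2).
Proof.
have E1 : (\sum_i a i ^+ 2) * (\sum_i b i ^+ 2) = \sum_i \sum_j a i ^+ 2 * b j ^+ 2.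
  by rewrite big_distrl; apply: eq_bigr => i _; rewrite big_distrr.
have E2 : (\sum_i a i ^+ 2) * (\sum_i b i ^+ 2) = \sum_i \sum_j a j ^+ 2 * b i ^+ 2.
  rewrite mulrC big_distrl; apply: eq_bigr => i _.
  by rewrite big_distrr; apply: eq_bigr => j _; rewrite mulrC.
have E3 : (\sum_i a i * b i) ^+ 2 = \sum_i \sum_j (a i * b i) * (a j * b j).
  by rewrite expr2 big_distrl; apply: eq_bigr => i _; rewrite big_distrr.
rewrite mulrBr mulr2n mulrDl mul1r {1}E1 E2 E3 [X in _ - X]big_distrr.
rewrite -big_split -sumrB /=; apply: eq_bigr => i _.
rewrite [X in _ - X]big_distrr -big_split -sumrB /=; apply: eq_bigr => j _; ring.
Qed.

Section EuclideanSums.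
Variables (R : rcfType) (n : nat).
Implicit Types a b : 'I_n -> R.

Lemma sum_sqr_ge0 a : 0 <= \sum_i a i ^+ 2.
Proof. by apply: sumr_ge0 => i _; exact: sqr_ge0. Qed.

Lemma cauchy_schwarz_sum a b :
  \sum_i a i * b i <= Num.sqrt (\sum_i a i ^+ 2) * Num.sqrt (\sum_i b i ^+ 2).
Proof.
rewrite -sqrtrM ?sum_sqr_ge0 //; apply: le_trans (ler_norm _) _.
rewrite -sqrtr_sqr ler_sqrt; last by rewrite mulr_ge0 ?sum_sqr_ge0.
have : 0 <= \sum_i \sum_j (a i * b j - a j * b i) ^+ 2.
  by apply: sumr_ge0 => i _; exact: sum_sqr_ge0.
by rewrite lagrange_identity pmulr_rge0 ?subr_ge0.
Qed.

Lemma minkowski_sum a b :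
  Num.sqrt (\sum_i (a i + b i) ^+ 2) <=
  Num.sqrt (\sum_i a i ^+ 2) + Num.sqrt (\sum_i b i ^+ 2).
Proof.
have -> : \sum_i (a i + b i) ^+ 2 =
    \sum_i a i ^+ 2 + \sum_i b i ^+ 2 + 2 * \sum_i a i * b i.
  by rewrite -!big_split big_distrr -big_split /=; apply: eq_bigr => i _; ring.
have := cauchy_schwarz_sum a b; have := sum_sqr_ge0 a; have := sum_sqr_ge0 b.
move: (\sum_i a i ^+ 2) (\sum_i b i ^+ 2) (\sum_i a i * b i) => A B P B0 A0 CS.
rewrite -[X in _ <= X]ger0_norm ?addr_ge0 ?sqrtr_ge0 // -sqrtr_sqr ler_sqrt ?sqr_ge0 //.
rewrite sqrrD !sqr_sqrtr // -mulr_natl -mulrA; lra.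
Qed.
End EuclideanSums.

Section Distance.
Variables (R : realType) (d : nat).
Implicit Types (x y z : Defs.point R d) (o : object R d).

Lemma edist_ge0 x y : 0 <= edist x y.
Proof. exact: sqrtr_ge0. Qed.

Lemma edist_sqr x y : edist x y ^+ 2 = \sum_i (x ord0 i - y ord0 i) ^+ 2.
Proof. by rewrite sqr_sqrtr // sum_sqr_ge0. Qed.

Lemma edist_sym x y : edist x y = edist y x.
Proof. by rewrite /edist; congr Num.sqrt; apply: eq_bigr => i _; ring. Qed.

Lemma edistxx x : edist x x = 0.
Proof. by rewrite /edist big1 ?sqrtr0 // => i _; rewrite subrr expr0n. Qed.

Lemma edist_triangle x y z : edist x z <= edist x y + edist y z.
Proof.
rewrite /edist (eq_bigr (fun i => (x ord0 i - y ord0 i + (y ord0 i - z ord0 i)) ^+ 2)).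
  exact: minkowski_sum.
by move=> i _; congr (_ ^+ 2); ring.
Qed.

Lemma edist_le x y r :
  0 <= r -> \sum_i (x ord0 i - y ord0 i) ^+ 2 <= r ^+ 2 -> edist x y <= r.
Proof. by move=> r0; rewrite -edist_sqr ler_pXn2r // nnegrE ?edist_ge0. Qed.

Definition small (r : R) o := forall x y, o x -> o y -> edist x y <= r.

Lemma edist_le_diam o x y : o x -> o y -> ((edist x y)%:E <= diam o)%E.
Proof. by move=> ox oy; apply: ereal_sup_ubound; exists x, y. Qed.

Lemma diam_le_small o r : small r o -> (diam o <= r%:E)%E.
Proof. by move=> H; apply: ge_ereal_sup => _ [x [y [ox [oy ->]]]]; rewrite lee_fin H. Qed.

Lemma small_diam_le o r : (diam o <= r%:E)%E -> small r o.
Proof. by move=> H x y ox oy; rewrite -lee_fin (le_trans _ H) ?edist_le_diam. Qed.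

Lemma not_small_diam_ge o r : ~ small r o -> (r%:E <= diam o)%E.
Proof. by move=> H; rewrite leNgt; apply/negP => /ltW/small_diam_le. Qed.

Lemma diam_ge0 o x : o x -> (0 <= diam o)%E.
Proof. by move=> ox; have := edist_le_diam ox ox; rewrite edistxx. Qed.

Lemma diam_gt0_nonempty o : (0 < diam o)%E -> exists x, o x.
Proof.
move=> H; apply: contrapT => no; move: H; rewrite ltNge diam_le_small //.
by move=> x y ox; case: no; exists x.
Qed.

Lemma fine_diam_ge0 o : 0 <= fine (diam o).
Proof.
have [[x ox]|no] := pselect (exists x, o x).
  by case: (diam o) (diam_ge0 ox) => //= r; rewrite lee_fin.
suff -> : diam o = -oo%E by [].
apply/eqP; rewrite eq_le leNye andbT; apply: ge_ereal_sup => r [x [y [ox _]]].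
by case: no; exists x.
Qed.

End Distance.

Section ClusterWalks.
Variables (R : realType) (d : nat) (F : seq (object R d)).
Local Notation obj i := (nth set0 F i).

Definition meets (i j : nat) : bool := `[< intersects (obj i) (obj j) >].

Lemma meetsP i j : reflect (intersects (obj i) (obj j)) (meets i j).
Proof. exact: asboolP. Qed.

Lemma meetsC i j : meets i j = meets j i.
Proof. by apply/meetsP/meetsP => -[x [H1 H2]]; exists x. Qed.

Lemma path_meets_dist r a q x y :
  path meets a q -> (forall j, j \in a :: q -> small r (obj j)) ->
  (obj a) x -> obj (last a q) y -> edist x y <= (size q).+1%:R * r.
Proof.
elim: q a x => [|b q IH] a x /=.
  by move=> _ Hs ax ay; rewrite mul1r (Hs a (mem_head _ _)).
move=> /andP [/meetsP [x' [ax' bx']] Hp] Hs ax Hy.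
apply: le_trans (edist_triangle x x' y) _; rewrite mulrS mulrDl mul1r lerD //.
  exact: Hs a (mem_head _ _) x x' ax ax'.
by apply: (IH b) => // j Hj; apply: Hs; rewrite inE Hj orbT.
Qed.

Lemma path_meets_first_large r a q x :
  0 <= r -> path meets a q -> (obj a) x -> ~ small r (obj (last a q)) ->
  exists h, [/\ h \in a :: q, ~ small r (obj h) &
    exists2 z, (obj h) z & edist x z <= (size q)%:R * r].
Proof.
move=> r0; elim: q a x => [|b q IH] a x /=.
  move=> _ ax Ha; exists a; split; rewrite ?mem_head //.
  by exists x; rewrite ?edistxx ?mul0r.
move=> /andP [/meetsP [x' [ax' bx']] Hp] ax Hl.
have [Sa|NSa] := pselect (small r (obj a)); last first.
  exists a; split; rewrite ?mem_head //.
  by exists x; rewrite ?edistxx ?mulr_ge0.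
have [h [Hh Hhs [z hz Hz]]] := IH b x' Hp bx' Hl.
exists h; split => //; first by rewrite inE Hh orbT.
exists z => //; apply: le_trans (edist_triangle x x' z) _.
by rewrite mulrS mulrDl mul1r lerD // Sa.
Qed.

Lemma shallow_cluster_path t c a b :
  shallow_cluster F t c -> a \in c -> b \in c ->
  exists q, [/\ path meets a q, last a q = b, (size q <= t + t)%N &
     {subset a :: q <= c}].
Proof.
move=> [u uc Hu] ac bc.
have from_u v : v \in c -> exists p, [/\ path meets u p, last u p = v,
    (size p <= t)%N & {subset u :: p <= c}].
  move=> vc; have [p [Hs Hl Hn]] := Hu v vc.
  exists p; split => //; first by apply/(pathP 0) => i /Hn [_ /meetsP].
  move=> j; rewrite inE => /predU1P [-> //|/(nthP 0) [i Hi <-]].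
  by case: (Hn i Hi).
have [pa [Pa La Sa Ca]] := from_u a ac.
have [pb [Pb Lb Sb Cb]] := from_u b bc.
have last_rev : last (last u pa) (rev (belast u pa)) = u.
  by case: (pa) => //= x p; rewrite rev_cons last_rcons.
exists (rev (belast u pa) ++ pb); split.
- rewrite cat_path -La rev_path last_rev Pb andbT.
  by rewrite (eq_path (e' := meets)) // => x y; rewrite /= meetsC.
- by rewrite last_cat -La last_rev.
- by rewrite size_cat size_rev size_belast leq_add.
- move=> j; rewrite inE mem_cat mem_rev => /orP [/eqP ->|/orP [Hj|Hj]] //.
  + by apply: Ca; apply: mem_belast Hj.
  + by apply: Cb; rewrite inE Hj orbT.
Qed.

Lemma shallow_cluster_small t c r :
  shallow_cluster F t c -> (forall j, j \in c -> small r (obj j)) ->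
  small ((t + t).+1%:R * r) (cl_union F c).
Proof.
move=> Hc Hs x y [a [ac ax]] [b [bc ay]].
have [q [Pq Lq Sq Cq]] := shallow_cluster_path Hc ac bc.
have r0 : 0 <= r := le_trans (edist_ge0 x x) (Hs a ac x x ax ax).
apply: le_trans (path_meets_dist Pq _ ax _) _.
- by move=> j /Cq; exact: Hs.
- by rewrite Lq.
by rewrite ler_wpM2r // ler_nat ltnS.
Qed.

Lemma shallow_cluster_not_small t c r :
  shallow_cluster F t c -> ~ small ((t + t).+1%:R * r) (cl_union F c) ->
  exists2 b, b \in c & ~ small r (obj b).
Proof.
move=> Hc Hns; apply: contrapT => Hno; apply: Hns; apply: shallow_cluster_small => // j jc.
by apply: contrapT => Hj; apply: Hno; exists j.
Qed.

Lemma shallow_cluster_diam_pinfty t c :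
  shallow_cluster F t c -> diam (cl_union F c) = +oo%E ->
  exists2 b, b \in c & diam (obj b) = +oo%E.
Proof.
move=> Hc Hinf; pose r := \sum_(j <- c) fine (diam (obj j)).
have [|b bc Hb] := shallow_cluster_not_small (r := r) Hc.
  by move=> /diam_le_small; rewrite Hinf.
exists b => //; apply: contrapT => Hfin; apply: Hb; apply: small_diam_le.
apply: (@le_trans _ _ (fine (diam (obj b)))%:E).
  by case: (diam (obj b)) Hfin => //= *; exact: leNye.
by rewrite lee_fin /r (big_rem b) //= lerDl sumr_ge0 // => j _; exact: fine_diam_ge0.
Qed.

Lemma shallow_cluster_near_large t c r a y :
  shallow_cluster F t c -> 0 <= r -> (exists2 b, b \in c & ~ small r (obj b)) ->
  a \in c -> (obj a) y ->
  exists h, [/\ h \in c, ~ small r (obj h) &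
    exists2 z, (obj h) z & edist y z <= (t + t)%:R * r].
Proof.
move=> Hc r0 [b bc Hb] ac ay.
have [q [Pq Lq Sq Cq]] := shallow_cluster_path Hc ac bc.
have Hl : ~ small r (obj (last a q)) by rewrite Lq.
have [h [Hh Hhs [z hz Hz]]] := path_meets_first_large r0 Pq ay Hl.
exists h; split; [exact: Cq | by [] |].
by exists z => //; apply: le_trans Hz _; rewrite ler_wpM2r // ler_nat.
Qed.

End ClusterWalks.

Section MinorClusters.
Variables (R : realType) (d : nat) (F : seq (object R d)).

Lemma minor_clusters_count_mem_le1 C i :
  minor_clusters F C -> (count (fun c => i \in c) C <= 1)%N.
Proof.
elim => {C} [|C k MC IH Hk|C k l MC IH Hk Hl Hkl _].
- rewrite count_map (eq_count (a2 := pred1 i)) => [|j /=]; last by rewrite inE eq_sym.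
  by rewrite count_uniq_mem ?iota_uniq ?leq_b1.
- apply: leq_trans IH; rewrite /del_at count_map count_filter.
  by rewrite [X in (_ <= X)%N](count_nth_iota [::]); apply: sub_count => j /andP [].
- apply: leq_trans IH; rewrite /merge_at count_cat count_map count_filter /= addn0.
  rewrite [X in (_ <= X)%N](count_nth_iota [::]).
  rewrite -[X in (_ <= X)%N](count_predI_predC _ (fun j => (j != k) && (j != l))).
  rewrite leq_add2l.
  case: (boolP (_ \in _ ++ _)) => [|_]; last exact: leq0n.
  rewrite mem_cat -has_count => /orP [ik|il]; apply/hasP.
  + by exists k; rewrite ?mem_iota //= eqxx ik.
  + by exists l; rewrite ?mem_iota //= eqxx andbF il.
Qed.

Lemma minor_clusters_disjoint C g g' i :
  minor_clusters F C -> i \in nth [::] C g -> i \in nth [::] C g' -> g = g'.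
Proof.
move=> /(minor_clusters_count_mem_le1 i) + ig ig'.
rewrite (count_nth_iota [::]) -size_filter.
have inC j : i \in nth [::] C j -> j \in [seq j <- iota 0 (size C) | i \in nth [::] C j].
  move=> ij; rewrite mem_filter ij mem_iota /= ltnNge.
  by apply: contraL ij => /(nth_default [::]) ->.
move: (inC g ig) (inC g' ig').
by case: [seq j <- iota 0 (size C) | i \in nth [::] C j] => [|x [|y s]] //=;
  rewrite !inE => /eqP -> /eqP ->.
Qed.

End MinorClusters.

Lemma sum_expr_half_le2 (R : realFieldType) (q : nat) :
  \sum_(i < q) (2^-1 : R) ^+ i <= 2.
Proof.
have := subrX1 (2^-1 : R) q.
have : 0 <= (2^-1 : R) ^+ q by rewrite exprn_ge0 // invr_ge0 ler0n.
by move: (\sum_(i < q) _) ((2^-1 : R) ^+ q) => S h h0 E; lra.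
Qed.

Section LatticeBall.
Variables (R : realFieldType) (K : nat).
Hypothesis K_gt0 : (0 < K)%N.

(* Points of the integer ball have weight at least 2^-d, whereas the whole
   box [-B, B]^d, coded by signs and absolute values, weighs at most (4K)^d. *)
Definition ball_weight (n : nat) : R := 2^-1 ^+ (n %/ K).

Lemma ball_weight_ge0 n : 0 <= ball_weight n.
Proof. by rewrite exprn_ge0 // invr_ge0 ler0n. Qed.

Lemma sum_ball_weight_block q :
  \sum_(0 <= n < q * K) ball_weight n = K%:R * \sum_(i < q) 2^-1 ^+ i.
Proof.
elim: q => [|q IH]; first by rewrite mul0n big_geq // big_ord0 mulr0.
rewrite (big_cat_nat (n := (q * K)%N)) //=; last by rewrite leq_pmul2r // ltnW.
rewrite IH big_ord_recr /= mulrDr; congr (_ + _).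
rewrite -{1}(add0n (q * K)%N) big_addn mulSn addnK.
rewrite (eq_big_nat _ _ (F2 := fun _ => 2^-1 ^+ q)); last first.
  by move=> i /andP [_ Hi]; rewrite /ball_weight divnDMl // divn_small.
by rewrite sumr_const_nat subn0 mulr_natl.
Qed.

Lemma sum_ball_weight_le M : \sum_(n < M) ball_weight n <= 2 * K%:R.
Proof.
rewrite -(big_mkord xpredT) (@le_trans _ _ (\sum_(0 <= n < M * K) ball_weight n)) //.
  rewrite [X in _ <= X](big_cat_nat (n := M)) ?leq_pmulr //=.
  by rewrite lerDl sumr_ge0 // => i _; exact: ball_weight_ge0.
by rewrite sum_ball_weight_block mulrC ler_pM2r ?sum_expr_half_le2 ?ltr0n.
Qed.

Lemma prod_ball_weight_ge (d : nat) (u : 'I_d -> nat) :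
  (\sum_i u i ^ 2 <= d * K ^ 2)%N -> 2^-1 ^+ d <= \prod_i ball_weight (u i).
Proof.
move=> Hu; rewrite /ball_weight prodrXr.
have sqr_divn n : (K ^ 2 * (n %/ K) <= n ^ 2)%N.
  apply: (@leq_trans ((n %/ K * K) ^ 2)%N); last by rewrite leq_exp2r ?leq_divM.
  by rewrite expnMn mulnC leq_mul2r leq_self_sqr orbT.
apply: ler_wiXn2l; rewrite ?invr_ge0 ?ler0n ?invf_le1 ?ler1n ?ltr0n //.
rewrite -(@leq_pmul2l (K ^ 2)) ?expn_gt0 ?K_gt0 // [X in (_ <= X)%N]mulnC.
rewrite (leq_trans _ Hu) // big_distrr leq_sum // => i _; exact: sqr_divn.
Qed.

Lemma sum_box_weight_le (d B : nat) :
  \sum_(v : {ffun 'I_d -> bool * 'I_B.+1}) \prod_i ball_weight (v i).2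
    <= (4 * K%:R) ^+ d.
Proof.
rewrite -(bigA_distr_bigA (fun (i : 'I_d) (p : bool * 'I_B.+1) => ball_weight p.2)).
rewrite prodr_const card_ord; apply: lerXn2r; rewrite ?nnegrE ?mulr_ge0 ?ler0n //.
  by apply: sumr_ge0 => p _; exact: ball_weight_ge0.
rewrite -(pair_big xpredT xpredT (fun (_ : bool) (n : 'I_B.+1) => ball_weight n)).
by rewrite big_bool /=; have := sum_ball_weight_le B.+1; lra.
Qed.

Lemma card_int_ball (d : nat) (L : seq {ffun 'I_d -> int}) :
  uniq L -> (forall u, u \in L -> (\sum_i `|u i| ^ 2 <= d * K ^ 2)%N) ->
  (size L)%:R <= ((8 * K) ^ d)%:R :> R.
Proof.
move=> L_uniq L_ball; set B := (d * K ^ 2)%N.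
have abs_le u i : u \in L -> (`|u i| < B.+1)%N.
  move=> /L_ball uL; rewrite ltnS (leq_trans _ uL) // (bigD1 i) //=.
  by rewrite (leq_trans (leq_self_sqr _) (leq_addr _ _)).
pose phi (u : {ffun 'I_d -> int}) : {ffun 'I_d -> bool * 'I_B.+1} :=
  [ffun i => (u i < 0, inord `|u i|)].
have phi_inj : {in L &, injective phi}.
  move=> u v uL vL /ffunP E; apply/ffunP => i; move: (E i); rewrite !ffunE.
  case=> Es /(congr1 val) /=; rewrite !inordK ?abs_le // => Ea.
  by rewrite [u i]numEsign [v i]numEsign Es -!abszE Ea.
pose W (v : {ffun 'I_d -> bool * 'I_B.+1}) := \prod_i ball_weight (v i).2.
have W_ge0 v : 0 <= W v by apply: prodr_ge0 => i _; exact: ball_weight_ge0.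
have W_phi u : u \in L -> 2^-1 ^+ d <= W (phi u).
  move=> uL; rewrite /W (eq_bigr (fun i => ball_weight `|u i|)) => [|i _].
    exact: prod_ball_weight_ge (L_ball u uL).
  by rewrite ffunE inordK ?abs_le.
have sum_W : \sum_v W v <= (4 * K%:R) ^+ d := sum_box_weight_le d B.
have : (size L)%:R * 2^-1 ^+ d <= (4 * K%:R) ^+ d :> R.
  rewrite -sum1_size natr_sum mulr_suml (le_trans _ sum_W) //.
  apply: (@le_trans _ _ (\sum_(u <- L) W (phi u))).
    rewrite big_seq_cond [X in _ <= X]big_seq_cond ler_sum // => u /andP [/W_phi].
    by rewrite mul1r.
  rewrite -(big_map phi xpredT W) big_uniq ?map_inj_in_uniq //.
  by rewrite [X in _ <= X](bigID (mem (map phi L))) /= lerDl sumr_ge0.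
rewrite -ler_pdivlMr ?exprn_gt0 ?invr_gt0 ?ltr0n // -exprVn invrK -exprMn.
by rewrite natrX natrM mulrAC (_ : (4 * 2 : R) = 8%:R) // -natrM.
Qed.

End LatticeBall.

Section Floor.
Variable R : archiRealFieldType.
Implicit Types v w : R.

Lemma abs_floor_sqr_le v : (`|Num.floor v|%:R) ^+ 2 <= 2 * v ^+ 2 + 2 :> R.
Proof.
have /andP [lev ltv] := floor_itv v; rewrite intrD in ltv.
rewrite natr_absz intr_norm real_normK ?num_real //.
move: lev ltv; set U := (Num.floor v)%:~R => lev ltv.
have : (v - U) ^+ 2 <= 1 by rewrite expr_le1 ?subr_ge0 //; lra.
by have := sqr_ge0 (U - 2 * v); nra.
Qed.

Lemma floor_eq_dist_lt1 v w : Num.floor v = Num.floor w -> `|v - w| < 1.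
Proof.
move=> E; have /andP [lev ltv] := floor_itv v; have /andP [lew ltw] := floor_itv w.
rewrite E in lev ltv; rewrite intrD in ltv ltw.
by rewrite ltr_norml; apply/andP; split; lra.
Qed.

End Floor.

Section Density.
Variables (R : realType) (d : nat) (F : seq (object R d)) (rho : R).
Hypothesis F_density : has_density F rho.
Local Notation obj i := (nth set0 F i).

Lemma has_density_ge0 : 0 <= rho.
Proof. by move: (@F_density set0 [::] isT); apply => i; rewrite in_nil. Qed.

Lemma has_density_seq o (S : seq nat) : uniq S ->
  (forall i, i \in S -> intersects o (obj i) /\ (diam o <= diam (obj i))%E) ->
  (size S)%:R <= rho.
Proof.
move=> S_uniq HS.
have S_lt i : i \in S -> (i < size F)%N.
  move=> /HS [[x [_ ix]] _]; rewrite ltnNge; apply/negP => /(nth_default set0) E.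
  by rewrite E in ix.
have -> : size S = size (pmap (insub : nat -> option 'I_(size F)) S).
  by rewrite size_pmap_sub; apply/esym/eqP; rewrite -all_count; apply/allP.
apply: (@F_density o); first exact: pmap_sub_uniq.
by move=> i; rewrite mem_pmap_sub => /HS.
Qed.

End Density.

Section Grid.
Variables (R : realType) (d : nat) (x0 : Defs.point R d) (del : R).
Hypothesis del_gt0 : 0 < del.

(* Cubes of side del / sqrt d have diameter at most del.  For d = 0 the
   division by zero gives grid_step = 0, harmless as there are no coordinates;
   grid_step_gt0 takes a coordinate as the witness that 0 < d. *)
Definition grid_step : R := del / Num.sqrt d%:R.

Definition grid_index (y : Defs.point R d) : {ffun 'I_d -> int} :=
  [ffun k => Num.floor ((y ord0 k - x0 ord0 k) / grid_step)].

Lemma grid_step_gt0 (k : 'I_d) : 0 < grid_step.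
Proof. by rewrite divr_gt0 // sqrtr_gt0 ltr0n (leq_ltn_trans _ (ltn_ord k)). Qed.

Lemma grid_step_sqr : grid_step ^+ 2 = del ^+ 2 / d%:R.
Proof. by rewrite expr_div_n sqr_sqrtr ?ler0n. Qed.

Definition grid_cell (u : {ffun 'I_d -> int}) : object R d :=
  fun y => grid_index y = u.

Lemma grid_cell_small u : small del (grid_cell u).
Proof.
move=> y y' yu y'u; apply: edist_le; first exact: ltW.
have coord_le k : (y ord0 k - y' ord0 k) ^+ 2 <= grid_step ^+ 2.
  have s_gt0 := grid_step_gt0 k.
  have := congr1 (fun f : {ffun 'I_d -> int} => f k) (etrans yu (esym y'u)).
  rewrite !ffunE => /floor_eq_dist_lt1.
  rewrite -mulrBl opprB addrA subrK normrM normfV (gtr0_norm s_gt0) ltr_pdivrMr //.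
  rewrite mul1r => /ltW lt_s; rewrite -real_normK ?num_real //.
  by apply: lerXn2r; rewrite // nnegrE ?normr_ge0 ?(ltW s_gt0).
apply: le_trans (ler_sum _ (fun k _ => coord_le k)) _.
rewrite sumr_const card_ord grid_step_sqr.
have [->|d_neq0] := eqVneq d 0%N; first by rewrite mulr0n sqr_ge0.
by rewrite -[_ *+ d]mulr_natr divfK // pnatr_eq0.
Qed.

Lemma grid_index_sum_sqr_le (N : nat) y : (0 < N)%N ->
  edist x0 y <= N%:R * del -> (\sum_k `|grid_index y k| ^ 2 <= d * (2 * N) ^ 2)%N.
Proof.
move=> N_gt0 y_near; rewrite -(ler_nat R) natr_sum.
pose a k := y ord0 k - x0 ord0 k.
have step k : ((`|grid_index y k| ^ 2)%N)%:R <= 2 * (a k / grid_step) ^+ 2 + 2 :> R.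
  by rewrite natrX ffunE abs_floor_sqr_le.
apply: le_trans (ler_sum _ (fun k _ => step k)) _.
rewrite big_split /= sumr_const card_ord -mulr_sumr.
have sum_a : \sum_k a k ^+ 2 <= (N%:R * del) ^+ 2.
  by rewrite -edist_sqr edist_sym lerXn2r // nnegrE ?edist_ge0 ?mulr_ge0 ?ler0n ?ltW.
have sum_scaled : \sum_k (a k / grid_step) ^+ 2 <= N%:R ^+ 2 * d%:R.
  rewrite (eq_bigr (fun k => a k ^+ 2 * grid_step ^-2)) => [|k _]; last first.
    exact: expr_div_n.
  rewrite -mulr_suml grid_step_sqr invf_div.
  rewrite mulrA ler_pdivrMr ?exprn_gt0 //.
  by apply: le_trans (ler_wpM2r (ler0n _ d) sum_a) _; rewrite exprMn mulrAC.
have d_le : d%:R <= N%:R ^+ 2 * d%:R :> R.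
  by rewrite ler_peMl // -natrX ler1n expn_gt0 N_gt0.
rewrite -[2 *+ d]mulr_natl natrM natrX natrM; lra.
Qed.

End Grid.

Section Packing.
Variables (R : realType) (d : nat) (F : seq (object R d)) (rho : R).
Hypothesis F_density : has_density F rho.
Variables (x0 : Defs.point R d) (del : R).
Hypothesis del_gt0 : 0 < del.
Local Notation obj i := (nth set0 F i).

Lemma density_packing (N : nat) (P : seq (nat * Defs.point R d)) :
  (0 < N)%N -> uniq (map fst P) ->
  (forall p, p \in P -> [/\ obj p.1 p.2, (del%:E <= diam (obj p.1))%E &
                           edist x0 p.2 <= N%:R * del]) ->
  (size P)%:R <= ((16 * N) ^ d)%:R * rho.
Proof.
move=> N_gt0 P_uniq HP; pose key (p : nat * Defs.point R d) := grid_index x0 del p.2.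
have cell_count u : (count_mem u (map key P))%:R <= rho.
  rewrite count_map -size_filter -(size_map fst).
  apply: (has_density_seq F_density (o := grid_cell x0 del u)).
    exact: subseq_uniq (map_subseq _ (filter_subseq _ _)) P_uniq.
  move=> i /mapP [p]; rewrite mem_filter => /andP [/eqP pu /HP [pz big _]] ->.
  split; first by exists p.2.
  by apply: le_trans big; apply: diam_le_small; exact: grid_cell_small.
have keys_card : (size (undup (map key P)))%:R <= ((8 * (2 * N)) ^ d)%:R :> R.
  apply: card_int_ball; rewrite ?muln_gt0 ?undup_uniq //.
  by move=> u; rewrite mem_undup => /mapP [p /HP [_ _ near] ->]; exact: grid_index_sum_sqr_le.
rewrite -(size_map key) -sum_count_mem_undup natr_sum.
apply: le_trans (ler_sum _ (fun u _ => cell_count u)) _.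
rewrite big_const_seq count_predT iter_addr_0 -[rho *+ _]mulr_natl.
rewrite mulnA in keys_card.
by apply: ler_wpM2r; [exact: has_density_ge0 F_density | exact: keys_card].
Qed.

End Packing.

Section ShallowMinorDensity.
Variables (R : realType) (d t : nat) (rho : R).
Variables (F : seq (object R d)) (C : seq (seq nat)).
Hypothesis F_density : has_density F rho.
Hypothesis C_minor : minor_clusters F C.
Hypothesis C_shallow : forall c, c \in C -> shallow_cluster F t c.
Local Notation obj i := (nth set0 F i).
Local Notation cluster g := (nth [::] C g).

Variables (o : object R d) (L : seq nat).
Hypothesis L_uniq : uniq L.
Hypothesis L_meets : forall g, g \in L ->
  [/\ (g < size C)%N, intersects o (cl_union F (cluster g)) &
      (diam o <= diam (cl_union F (cluster g)))%E].

Lemma cluster_shallow g : g \in L -> shallow_cluster F t (cluster g).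
Proof. by move=> /L_meets [gC _ _]; apply: C_shallow; exact: mem_nth. Qed.

Lemma size_clusters_representatives o' :
  (forall g, g \in L -> exists2 b, b \in cluster g &
     intersects o' (obj b) /\ (diam o' <= diam (obj b))%E) ->
  (size L)%:R <= rho.
Proof.
move=> Hrep.
pose rep g b := b \in cluster g /\ intersects o' (obj b) /\ (diam o' <= diam (obj b))%E.
have /choice [f Hf] : forall g, exists b, g \in L -> rep g b.
  move=> g; have [/Hrep [b bg Hb]|] := boolP (g \in L); last by exists 0%N.
  by exists b.
rewrite -(size_map f); apply: (has_density_seq F_density (o := o')).
  rewrite map_inj_in_uniq // => g g' /Hf [fg _] /Hf [fg' _] E.
  by rewrite E in fg; exact: minor_clusters_disjoint C_minor fg fg'.
by move=> _ /mapP [g /Hf [_ Hg] ->].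
Qed.

Lemma size_clusters_diam_le0 : (diam o <= 0)%E -> (size L)%:R <= rho.
Proof.
move=> o_le0; apply: (size_clusters_representatives (o' := o)).
move=> g /L_meets [_ [x [ox [b [bg bx]]]] _].
exists b => //; split; first by exists x.
exact: le_trans o_le0 (diam_ge0 bx).
Qed.

Lemma size_clusters_diam_pinfty : diam o = +oo%E -> (size L)%:R <= rho.
Proof.
move=> o_inf; apply: (size_clusters_representatives (o' := setT)) => g gL.
have [_ _] := L_meets gL; rewrite o_inf leye_eq => /eqP.
move=> /(shallow_cluster_diam_pinfty (cluster_shallow gL)) [b bg b_inf].
exists b => //; rewrite b_inf leey; split => //.
by have [|x bx] := @diam_gt0_nonempty _ _ (obj b); [rewrite b_inf | exists x].
Qed.

Lemma size_clusters_diam_gt0 D : diam o = D%:E -> 0 < D ->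
  (size L)%:R <= ((64 * t.+1) ^ d)%:R * rho.
Proof.
(* A cluster whose members all have diameter below del has diameter below D. *)
move=> oD D_gt0; pose del := D / (t + t + 2)%:R.
have del_gt0 : 0 < del by rewrite divr_gt0 // ltr0n addn2.
have D_del : D = (t + t + 2)%:R * del by rewrite /del mulrC divfK // pnatr_eq0 addn2.
have [x0 ox0] : exists x0, o x0 by apply: diam_gt0_nonempty; rewrite oD lte_fin.
pose near g p := [/\ p.1 \in cluster g, ~ small del (obj p.1), obj p.1 p.2 &
                     edist x0 p.2 <= (4 * t.+1)%:R * del].
have /choice [f Hf] : forall g, exists p, g \in L -> near g p.
  move=> g; have [gL|] := boolP (g \in L); last by exists (0%N, x0).
  have [_ [y0 [oy0 [a [ag ay0]]]] o_le] := L_meets gL.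
  have [|b bg Hb] := shallow_cluster_not_small (r := del) (cluster_shallow gL).
    move=> /diam_le_small /(le_trans o_le); rewrite oD lee_fin D_del.
    by rewrite ler_pM2r // ler_nat addn2 ltnn.
  have [h [hg Hh [z hz yz]]] := shallow_cluster_near_large (cluster_shallow gL)
    (ltW del_gt0) (ex_intro2 _ _ b bg Hb) ag ay0.
  exists (h, z) => _; split => //=; apply: le_trans (edist_triangle x0 y0 z) _.
  have xy : edist x0 y0 <= D by rewrite -lee_fin -oD edist_le_diam.
  rewrite D_del in xy; apply: le_trans (lerD xy yz) _.
  by rewrite -mulrDl ler_pM2r // -natrD ler_nat; lia.
rewrite -(size_map f) (_ : 64 * t.+1 = 16 * (4 * t.+1))%N; last by rewrite mulnA.
apply: (density_packing F_density (x0 := x0) del_gt0) => //.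
  rewrite -map_comp map_inj_in_uniq // => g g' /Hf [fg _ _ _] /Hf [fg' _ _ _] /= E.
  by rewrite E in fg; exact: minor_clusters_disjoint C_minor fg fg'.
move=> _ /mapP [g /Hf [_ Hns hz Hz] ->]; split => //.
exact: not_small_diam_ge.
Qed.

Lemma size_clusters_le : (size L)%:R <= ((64 * t.+1) ^ d)%:R * rho.
Proof.
have rho_ge0 := has_density_ge0 F_density.
have le_bound : rho <= ((64 * t.+1) ^ d)%:R * rho.
  by rewrite ler_peMl // ler1n expn_gt0.
have [o_le0|] := leP (diam o) 0%E.
  exact: le_trans (size_clusters_diam_le0 o_le0) le_bound.
case oD: (diam o) => [D| |] //.
  by rewrite lte_fin; exact: size_clusters_diam_gt0.
by move=> _; exact: le_trans (size_clusters_diam_pinfty oD) le_bound.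
Qed.

End ShallowMinorDensity.

Lemma mul64S_leq_exp7 (t : nat) : (64 * t.+1 <= (t + 2) ^ 7)%N.
Proof.
rewrite expnSr; apply: leq_mul; last by rewrite addn2.
by rewrite (@leq_trans (2 ^ 6)) // leq_exp2r // addn2.
Qed.

Theorem mainTheorem9 :
  exists c : nat, forall (R : realType) (d t : nat) (rho : R)
    (F : seq (object R d)) (C : seq (seq nat)),
    has_density F rho -> is_shallow_minor F t C ->
    has_density (minor_of F C) (((t + 2) ^ (c * d))%:R * rho).
Proof.
exists 7%N => R d t rho F C F_density [C_minor C_shallow] o S S_uniq HS.
have size_C : size (minor_of F C) = size C by rewrite size_map.
rewrite -(size_map val).
apply: le_trans (size_clusters_le F_density C_minor C_shallow (o := o) _ _) _.
- by rewrite map_inj_uniq //; exact: val_inj.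
- move=> _ /mapP [g gS ->]; have gC : (g < size C)%N by rewrite -size_C.
  by have [] := HS g gS; rewrite (nth_map [::]).
apply: ler_wpM2r; first exact: has_density_ge0 F_density.
rewrite expnM natrX [X in _ <= X]natrX; apply: lerXn2r; rewrite ?nnegrE ?ler0n //.
by rewrite ler_nat mul64S_leq_exp7.
Qed.
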